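(* Let $E$ be a finite nonempty set, $X\in\mathcal{X}(2)\setminus\mathcal{X}^*(2)$, and let $f:2^E\to\mathbb{N}$ and $S,T\subseteq E$ satisfy: $X=\mathbb{B}_f(2)$; for every $U\subseteq E$ there is $\vec x\in\mathbb{B}_f(2)$ with $x(U)=f(U)$; and $f(S)=f(T)=f(S\cap T)=1$, $f(S\cup T)=2$. Then for every $\vec x\in\mathbb{B}_f(2)$ with $\mathrm{supp}(\vec x)\subseteq S\cup T$ we have $\mathrm{supp}(\vec x)\cap(S\cap T)=\emptyset$.
   Context: $\mathbb{N}=\{0,1,2,\dots\}$; $x(U)=\sum_{e\in U}x_e$; $\mathrm{supp}(\vec x)=\{e: x_e\neq0\}$. For $f:2^E\to\mathbb{N}$, $\mathbb{B}_f(d)=\{\vec x\in\mathbb{N}^E: x(U)\le f(U)\ \forall U\subseteq E,\ x(E)=d\}$. $f$ is strictly positive if $f(U)>0$ for all nonempty $U$, normalized if $f(\emptyset)=0$, monotonic if $f(U)\le f(V)$ for $U\subseteq V$. $\mathcal{X}(d)=\{\mathbb{B}_f(d): f \text{ strictly positive, normalized, monotonic}\}$, $\mathcal{X}^*(d)=\{\mathbb{B}_f(d): f\text{ strictly positive, normalized, monotonic, submodular}\}$. *)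

From mathcomp Require Import all_boot.
Set Implicit Arguments. Unset Strict Implicit. Unset Printing Implicit Defensive.

Section Defs.
Variable E : finType.

Definition xsum (x : {ffun E -> nat}) (U : {set E}) : nat := \sum_(e in U) x e.

Definition supp (x : {ffun E -> nat}) : {set E} := [set e | x e != 0].

Definition Bf (f : {set E} -> nat) (d : nat) : pred {ffun E -> nat} :=
  fun x => [forall U : {set E}, xsum x U <= f U] && (xsum x [set: E] == d).

Definition strictly_positive (f : {set E} -> nat) : Prop :=
  forall U : {set E}, U != set0 -> 0 < f U.
Definition normalized (f : {set E} -> nat) : Prop := f set0 = 0.
Definition monotonic (f : {set E} -> nat) : Prop :=
  forall U V : {set E}, U \subset V -> f U <= f V.
Definition submodular (f : {set E} -> nat) : Prop :=
  forall U V : {set E}, f (U :|: V) + f (U :&: V) <= f U + f V.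

Definition in_calX (d : nat) (X : pred {ffun E -> nat}) : Prop :=
  exists f, [/\ strictly_positive f, normalized f, monotonic f & X =1 Bf f d].

Definition in_calXstar (d : nat) (X : pred {ffun E -> nat}) : Prop :=
  exists f, [/\ strictly_positive f, normalized f, monotonic f, submodular f
              & X =1 Bf f d].
End Defs.

(** [U |-> x(U)] is modular, so a vector [x] of [B_f(2)] supported in [S ∪ T]
    satisfies [x(S ∩ T) = x(S) + x(T) - x(S ∪ T) <= f(S) + f(T) - 2 = 0].
    Only [f(S) = f(T) = 1] is needed. *)
From mathcomp Require Import all_boot.

Set Implicit Arguments.
Unset Strict Implicit.
Unset Printing Implicit Defensive.

Section Xsum.
Variable E : finType.
Implicit Types (x : {ffun E -> nat}) (A B : {set E}).

Lemma xsumUI x A B : xsum x (A :|: B) + xsum x (A :&: B) = xsum x A + xsum x B.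
Proof.
rewrite /xsum (big_setID B) (big_setID (A := A) B) /=.
rewrite [A :|: B]setUC setUK setDUl setDv set0U.
by rewrite addnAC [in RHS]addnAC (addnC (\sum_(i in A :&: B) x i)).
Qed.

Lemma xsum_supp x A : supp x \subset A -> xsum x A = xsum x [set: E].
Proof.
move=> suppA; rewrite /xsum [RHS](big_setID A) /= setTI.
rewrite [X in _ + X]big1 ?addn0 // => e.
rewrite !inE andbT => eNA; apply/eqP; apply: contraNT eNA => xe.
by apply: (subsetP suppA); rewrite inE.
Qed.

Lemma xsum_eq0 x A : (xsum x A == 0) = (supp x :&: A == set0).
Proof.
rewrite /xsum sum_nat_eq0; apply/forall_inP/eqP => [x0 | ].
  by apply/setP => e; rewrite !inE; apply/andP => -[/negP + /x0].
move=> /setP disj e eA; move: (disj e); rewrite !inE eA andbT.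
by move/negbFE.
Qed.

Lemma Bf_xsum_setI_le f d x S T :
  Bf f d x -> supp x \subset S :|: T -> xsum x (S :&: T) + d <= f S + f T.
Proof.
move=> /andP[/forallP xle /eqP xE] suppST.
rewrite -xE -(xsum_supp suppST) addnC xsumUI.
exact: leq_add (xle S) (xle T).
Qed.

End Xsum.

Theorem lemma6p2 (E : finType) (X : pred {ffun E -> nat})
  (f : {set E} -> nat) (S T : {set E}) :
  0 < #|E| ->
  in_calX 2 X -> ~ in_calXstar 2 X ->
  X =1 Bf f 2 ->
  (forall U : {set E}, exists x, Bf f 2 x /\ xsum x U = f U) ->
  f S = 1 -> f T = 1 -> f (S :&: T) = 1 -> f (S :|: T) = 2 ->
  forall x : {ffun E -> nat}, Bf f 2 x -> supp x \subset S :|: T ->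
  supp x :&: (S :&: T) = set0.
Proof.
move=> _ _ _ _ _ fS fT _ _ x xB suppST; apply/eqP.
have := Bf_xsum_setI_le xB suppST.
by rewrite fS fT -[1 + 1]/(0 + 2) leq_add2r leqn0 xsum_eq0.
Qed.
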